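(* Let $V\in\mathbb{R}^{k\times n}$ with columns $v_1,\ldots,v_n$ satisfy $\mathrm{rank}(V)<k$. Let $P=\mathrm{diag}(P_1,\ldots,P_n)\in\mathbb{R}^{nk\times nk}$ be block diagonal with $P_i=I_k-v_iv_i^T$. Then for any $A,B\in\mathbb{R}^{n\times n}$, every (possibly complex) eigenvalue of $AB$ is also an eigenvalue of $J=(A\otimes I_k)\,P\,(B\otimes I_k)$.
   Context: $\otimes$ is the Kronecker product; $I_k$ is the $k\times k$ identity. *)

From HB Require Import structures.
From mathcomp Require Import all_boot all_order all_algebra.
From mathcomp Require Import complex mxtens.
Set Implicit Arguments. Unset Strict Implicit. Unset Printing Implicit Defensive.
Import Order.TTheory GRing.Theory Num.Theory.
Local Open Scope ring_scope.

(* Kronecker product: [A *t B] from real_closed/mxtens, row index (i,a) ~ i*k+a. *)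

(* Block diagonal P = diag(P_1,...,P_n) with P_i = I_k - v_i v_i^T,
   where v_i = col i V; written as sum_i E_ii (x) P_i (same index ordering
   as the Kronecker products A (x) I_k). *)
Definition blockP (R : pzRingType) (k n : nat) (V : 'M[R]_(k, n)) : 'M[R]_(n * k) :=
  \sum_(i < n) (delta_mx i i *t (1%:M - col i V *m (col i V)^T)).

Definition Jmx (R : pzRingType) (k n : nat) (V : 'M[R]_(k, n)) (A B : 'M[R]_n)
  : 'M[R]_(n * k) :=
  (A *t (1%:M : 'M[R]_k)) *m blockP V *m (B *t (1%:M : 'M[R]_k)).

Definition cmx (R : rcfType) (m p : nat) (M : 'M[R]_(m, p)) : 'M[complex R]_(m, p) :=
  map_mx (fun x : R => Complex x 0) M.

From HB Require Import structures.
From mathcomp Require Import all_boot all_order all_algebra.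
From mathcomp Require Import complex mxtens.
Import Order.TTheory GRing.Theory Num.Theory.
Local Open Scope ring_scope.

(* Since rank V < k there is a nonzero row vector w with w V = 0, i.e. w is
   orthogonal to every column v_i; then w P_i = w for all i, so X (x) w is
   fixed by P for every X.  Hence for a left eigenvector u of
   AB, (u (x) w) J = (u A (x) w) (B (x) I_k) = u A B (x) w = lambda (u (x) w).
   The complex case follows because J commutes with the embedding of R into
   R[i], which also preserves ranks. *)

Section JmxEigenvalues.
Local Set Implicit Arguments.
Local Unset Strict Implicit.

Section Tensor.
Variable R : comPzRingType.

Lemma tensmx_suml (I : Type) (r : seq I) (P : pred I) m n p q
    (G : I -> 'M[R]_(m, n)) (M : 'M[R]_(p, q)) :
  (\sum_(i <- r | P i) G i) *t M = \sum_(i <- r | P i) (G i *t M).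
Proof.
apply/matrixP => a b; rewrite !mxE summxE mulr_suml summxE.
by apply: eq_bigr => i _; rewrite !mxE.
Qed.

Lemma tensmxZl m n p q (c : R) (M : 'M[R]_(m, n)) (N : 'M[R]_(p, q)) :
  (c *: M) *t N = c *: (M *t N).
Proof. by apply/matrixP => a b; rewrite !mxE mulrA. Qed.

Lemma mulmx_tens_blockP k n p q (V : 'M[R]_(k, n)) (X : 'M[R]_(p, n))
    (W : 'M[R]_(q, k)) :
  W *m V = 0 -> (X *t W) *m blockP V = X *t W.
Proof.
move=> WV0; have WPi i : W *m (1%:M - col i V *m (col i V)^T) = W.
  by rewrite mulmxBr mulmx1 mulmxA colE mulmxA WV0 !mul0mx subr0.
rewrite /blockP mulmx_sumr.
under eq_bigr => i _ do rewrite tensmx_mul WPi.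
by rewrite -tensmx_suml -mulmx_sumr -mx1_sum_delta mulmx1.
Qed.

Lemma mulmx_tens_Jmx k n p (V : 'M[R]_(k, n)) (A B : 'M[R]_n)
    (u : 'rV[R]_n) (W : 'M[R]_(p, k)) (lambda : R) :
  W *m V = 0 -> u *m (A *m B) = lambda *: u ->
  (u *t W) *m Jmx V A B = lambda *: (u *t W).
Proof.
move=> WV0 uAB.
rewrite /Jmx !mulmxA tensmx_mul mulmx1 mulmx_tens_blockP // tensmx_mul mulmx1.
by rewrite -mulmxA uAB tensmxZl.
Qed.

End Tensor.

Lemma tensmx_neq0 (R : idomainType) m n p q (M : 'M[R]_(m, n))
    (N : 'M[R]_(p, q)) :
  M != 0 -> N != 0 -> M *t N != 0.
Proof.
move=> /matrix0Pn [i [j Mij]] /matrix0Pn [a [b Nab]].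
apply/matrix0Pn; exists (mxtens_index (i, a)), (mxtens_index (j, b)).
by rewrite tensmxE mulf_neq0.
Qed.

Lemma eigenvalue_Jmx (F : fieldType) k n (V : 'M[F]_(k, n)) (A B : 'M[F]_n)
    (lambda : F) :
  (\rank V < k)%N -> eigenvalue (A *m B) lambda ->
  eigenvalue (Jmx V A B) lambda.
Proof.
move=> rankV /eigenvalueP [u uAB u_neq0].
have /rowV0Pn [w /sub_kermxP wV0 w_neq0] : kermx V != 0.
  by rewrite kermx_eq0 /row_free neq_ltn rankV.
apply/eigenvalueP; exists (u *t w); first exact: (mulmx_tens_Jmx wV0 uAB).
exact: (tensmx_neq0 u_neq0 w_neq0).
Qed.

Lemma map_Jmx (aR rR : comPzRingType) (f : {rmorphism aR -> rR}) k n
    (V : 'M[aR]_(k, n)) (A B : 'M[aR]_n) :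
  map_mx f (Jmx V A B) = Jmx (map_mx f V) (map_mx f A) (map_mx f B).
Proof.
rewrite /Jmx /blockP !map_mxM !map_mxT map_mx1 map_mx_sum.
congr (_ *m _ *m _); apply: eq_bigr => i _.
by rewrite map_mxT map_delta_mx map_mxB map_mx1 map_mxM -map_trmx map_col.
Qed.

End JmxEigenvalues.

Theorem lemma8 (R : rcfType) (k n : nat) (V : 'M[R]_(k, n))
  (hV : (\rank V < k)%N) (A B : 'M[R]_n) (lambda : complex R) :
  eigenvalue (cmx (A *m B)) lambda ->
  eigenvalue (cmx (Jmx V A B)) lambda.
Proof.
rewrite /cmx; change (fun x : R => Complex x 0) with (real_complex R).
rewrite map_mxM map_Jmx; apply: eigenvalue_Jmx.
by rewrite mxrank_map.
Qed.
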